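(* For each $n\ge 1$ let $G_n$ be a random graph with $n$ vertices drawn from a given class of random graphs. Let $d_{n,k}$ be the probability that a uniformly randomly selected vertex of $G_n$ has degree $k$, and let $d_{n,k,\ell}$ be the probability that two different uniformly randomly selected (ordered) vertices of $G_n$ have degrees $k$ and $\ell$, respectively. Suppose that: 1. There exists a limiting degree distribution $(\overline d_k)_{k\ge1}$ with $\log \overline d_k \sim k\log q$ as $k\to\infty$, where $q$ is a real constant with $0<q<1$. 2. As $n\to\infty$, $k\to\infty$, $\ell\to\infty$, and uniformly for $k,\ell\le C\log n$ (for an arbitrary constant $C>0$), $d_{n,k}\sim \overline d_k$ and $d_{n,k,\ell}\sim \overline d_k\,\overline d_\ell$. 3. There exists $\overline q<1$ such that, uniformly for all $n,k,\ell\ge1$, $d_{n,k}=O(\overline q^{\,k})$ and $d_{n,k,\ell}=O(\overline q^{\,k+\ell})$. Let $\Delta_n$ be the maximum degree of $G_n$. Then $\Delta_n/\log n \to 1/\log(1/q)$ in probability, and $\mathbb{E}\,\Delta_n \sim \frac{1}{\log(1/q)}\log n$ as $n\to\infty$. *)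

From HB Require Import structures.
From mathcomp Require Import all_boot all_order all_algebra.
From mathcomp Require Import all_classical all_reals all_analysis.
Set Implicit Arguments. Unset Strict Implicit. Unset Printing Implicit Defensive.
Import Order.TTheory GRing.Theory Num.Theory.
Import numFieldNormedType.Exports.
Local Open Scope ring_scope.

(* A graph on the vertex set 'I_n is given by its (directed) edge set;
   it is a simple graph when this set is symmetric and irreflexive. *)
Definition graph (n : nat) := {set ('I_n * 'I_n)}.

Definition simple_graph (n : nat) (E : graph n) : bool :=
  [forall u, forall v, ((u, v) \in E) == ((v, u) \in E)] &&
  [forall u, (u, u) \notin E].

Definition deg (n : nat) (E : graph n) (v : 'I_n) : nat :=
  #|[set w | (v, w) \in E]|.

Definition maxdeg (n : nat) (E : graph n) : nat := \max_(v : 'I_n) deg E v.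

Definition random_graph (R : realType) (n : nat) (P : {ffun graph n -> R}) : Prop :=
  (forall E, 0 <= P E) /\ (\sum_(E : graph n) P E = 1) /\
  (forall E, P E != 0 -> simple_graph E).

Definition prob (R : realType) (n : nat) (P : {ffun graph n -> R})
  (A : pred (graph n)) : R := \sum_(E : graph n | A E) P E.

Definition expect (R : realType) (n : nat) (P : {ffun graph n -> R})
  (X : graph n -> R) : R := \sum_(E : graph n) P E * X E.

(* d_{n,k}: probability that a uniformly random vertex has degree k *)
Definition dnk (R : realType) (n : nat) (P : {ffun graph n -> R}) (k : nat) : R :=
  expect P (fun E => #|[set v : 'I_n | deg E v == k]|%:R) / n%:R.

(* d_{n,k,l}: probability that two distinct uniformly random ordered vertices
   have degrees k and l respectively *)
Definition dnkl (R : realType) (n : nat) (P : {ffun graph n -> R}) (k l : nat) : R :=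
  expect P (fun E => #|[set uv : 'I_n * 'I_n |
                        [&& uv.1 != uv.2, deg E uv.1 == k & deg E uv.2 == l]]|%:R)
  / (n * n.-1)%:R.

(* Write Delta for the maximum degree, N_k for the number of vertices of degree k,
   L = ln n and a = ln (1/q), so that E N_k = n d_{n,k} is roughly n e^{-a k}.
   If c a > 1, the expected total degree of the vertices of degree at least c L tends
   to 0: up to C L hypothesis 2 makes it a geometric tail of size n^{1 - c a + o(1)} L,
   and beyond C L hypothesis 3 makes every d_{n,k} smaller than n^-4.  This bounds both
   P(Delta >= c L) and the excess of E Delta over c L.  If c a < 1, then E N_k tends to
   infinity for k close to c L, while hypothesis 2 gives
   E[N_k (N_k - 1)] <= (1 + o(1)) (E N_k)^2, so by the second moment method N_k > 0,
   i.e. Delta >= c L, with high probability. *)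

From HB Require Import structures.
From mathcomp Require Import all_boot all_order all_algebra.
From mathcomp Require Import all_classical all_reals all_analysis.
From mathcomp Require Import zify ring lra.
Import Order.TTheory GRing.Theory Num.Theory.
Import numFieldNormedType.Exports.
Set Implicit Arguments. Unset Strict Implicit. Unset Printing Implicit Defensive.
Local Open Scope ring_scope.

(** * Degree counts *)

Definition ndeg n (E : graph n) (k : nat) : nat := #|[set v : 'I_n | deg E v == k]|.

Definition deg_tail n (E : graph n) (k : nat) : nat :=
  \sum_(k <= j < n.+1) j * ndeg E j.

Lemma deg_le_order n (E : graph n) v : (deg E v <= n)%N.
Proof. by rewrite /deg -[X in (_ <= X)%N](card_ord n) max_card. Qed.

Lemma ndeg_gt_maxdeg n (E : graph n) k : (maxdeg E < k)%N -> ndeg E k = 0%N.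
Proof.
move=> ltDk; apply/eqP; rewrite cards_eq0; apply/eqP/setP => v; rewrite !inE.
apply/negbTE/eqP => degvk; have := leq_bigmax (F := deg E) v.
by rewrite -/(maxdeg E) degvk leqNgt ltDk.
Qed.

Lemma maxdeg_le_deg_tail n (E : graph n) k :
  (k <= maxdeg E)%N -> (maxdeg E <= deg_tail E k)%N.
Proof.
case: n E => [|n] E kleD; first by rewrite /maxdeg big_ord0.
have [v Dv] := bigop.eq_bigmax (deg E) (ltac:(by rewrite card_ord) : (0 < #|'I_n.+1|)%N).
rewrite /maxdeg Dv in kleD *.
rewrite /deg_tail (bigD1_seq (deg E v)) ?iota_uniq //=; last first.
  by rewrite mem_index_iota kleD ltnS deg_le_order.
have ndeg_gt0 : (0 < ndeg E (deg E v))%N.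
  by rewrite card_gt0; apply/set0Pn; exists v; rewrite inE.
by rewrite (leq_trans (leq_pmulr _ ndeg_gt0)) ?leq_addr.
Qed.

Lemma maxdeg_le_add_deg_tail n (E : graph n) k : (maxdeg E <= k + deg_tail E k)%N.
Proof.
have [kleD|Dltk] := leqP k (maxdeg E).
  exact: leq_trans (maxdeg_le_deg_tail kleD) (leq_addl _ _).
exact: leq_trans (ltnW Dltk) (leq_addr _ _).
Qed.

Lemma card_deg_pairs n (E : graph n) k :
  (#|[set uv : 'I_n * 'I_n | [&& uv.1 != uv.2, deg E uv.1 == k & deg E uv.2 == k]]|
   + ndeg E k = ndeg E k * ndeg E k)%N.
Proof.
set S := [set v : 'I_n | deg E v == k].
rewrite /ndeg -/S -cardsX -(cardsID [set uv : 'I_n * 'I_n | uv.1 == uv.2] (finset.setX S S)).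
rewrite addnC; congr (_ + _)%N.
  rewrite -(@card_imset _ _ (fun v => (v, v)) S); last by move=> x y [].
  apply: eq_card => -[u w]; rewrite !inE /=; apply/imsetP/idP.
    by move=> [v vS [-> ->]]; move: vS; rewrite inE => ->; rewrite eqxx.
  by case/andP=> /andP[uS _] /eqP <-; exists u; rewrite ?inE.
apply: eq_card => -[u w]; rewrite !inE /=.
by case: (u == w); case: (deg E u == k); case: (deg E w == k).
Qed.

(** * Finite probability on graphs *)

Section FiniteProbability.
Variables (R : realType) (n : nat) (P : {ffun graph n -> R}).
Hypothesis HP : random_graph P.

Lemma expect_ge0 (f : graph n -> R) : (forall E, 0 <= f E) -> 0 <= expect P f.
Proof. by case: HP => P_ge0 _ f_ge0; apply: sumr_ge0 => E _; rewrite mulr_ge0. Qed.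

Lemma ler_expect (f g : graph n -> R) :
  (forall E, f E <= g E) -> expect P f <= expect P g.
Proof. by case: HP => P_ge0 _ fleg; apply: ler_sum => E _; rewrite ler_wpM2l. Qed.

Lemma expectD (f g : graph n -> R) :
  expect P (fun E => f E + g E) = expect P f + expect P g.
Proof. by rewrite /expect -big_split; apply: eq_bigr => E _; rewrite mulrDr. Qed.

Lemma expectZ c (f : graph n -> R) : expect P (fun E => c * f E) = c * expect P f.
Proof. by rewrite /expect mulr_sumr; apply: eq_bigr => E _; rewrite mulrCA. Qed.

Lemma expect_cst c : expect P (fun=> c) = c.
Proof. by case: HP => _ [P_sum _]; rewrite /expect -mulr_suml P_sum mul1r. Qed.

Lemma expect_sum (I : Type) (r : seq I) (F : I -> graph n -> R) :
  expect P (fun E => \sum_(i <- r) F i E) = \sum_(i <- r) expect P (F i).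
Proof.
rewrite /expect -exchange_big /=; apply: eq_bigr => E _.
by rewrite mulr_sumr.
Qed.

Lemma prob_expect (A : pred (graph n)) : prob P A = expect P (fun E => (A E)%:R).
Proof.
rewrite /prob /expect big_mkcond; apply: eq_bigr => E _.
by case: (A E); rewrite ?mulr1 ?mulr0.
Qed.

Lemma prob_ge0 (A : pred (graph n)) : 0 <= prob P A.
Proof. by rewrite prob_expect expect_ge0. Qed.

Lemma ler_prob (A B : pred (graph n)) :
  (forall E, A E -> B E) -> prob P A <= prob P B.
Proof.
move=> AB; rewrite !prob_expect; apply: ler_expect => E.
by case AE: (A E); rewrite ?(AB _ AE) //=; case: (B E).
Qed.

Lemma prob_le_expect (A : pred (graph n)) (f : graph n -> R) :
  (forall E, 0 <= f E) -> (forall E, A E -> 1 <= f E) -> prob P A <= expect P f.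
Proof.
move=> f_ge0 f_ge1; rewrite prob_expect; apply: ler_expect => E.
by case AE: (A E); [exact: f_ge1 | exact: f_ge0].
Qed.

Lemma prob_or_le (A B : pred (graph n)) :
  prob P (fun E => A E || B E) <= prob P A + prob P B.
Proof.
rewrite !prob_expect -expectD; apply: ler_expect => E.
by case: (A E); case: (B E); rewrite ?lerDl ?lerDr.
Qed.

Lemma prob_eq0_le_var (X : graph n -> R) : 0 < expect P X ->
  prob P (fun E => X E == 0) <=
  (expect P (fun E => X E ^+ 2) - expect P X ^+ 2) / expect P X ^+ 2.
Proof.
set mu := expect P X => mu_gt0; have mu_neq0 := lt0r_neq0 mu_gt0.
apply: le_trans (_ : expect P (fun E => (X E - mu) ^+ 2 / mu ^+ 2) <= _).
  apply: prob_le_expect => E; first by rewrite divr_ge0 ?sqr_ge0 ?exprn_ge0 ?ltW.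
  by move/eqP => ->; rewrite sub0r sqrrN divff ?expf_neq0.
have -> : (fun E => (X E - mu) ^+ 2 / mu ^+ 2) =
    (fun E => (mu ^+ 2)^-1 * X E ^+ 2 + ((- (2 * mu) / mu ^+ 2) * X E + mu ^+ 2 / mu ^+ 2)).
  by apply: funext => E; rewrite /= !mulrDl; ring.
rewrite !expectD !expectZ expect_cst -/mu le_eqVlt; apply/orP; left; apply/eqP.
by field.
Qed.

Lemma dnk_ge0 k : 0 <= dnk P k.
Proof. by rewrite /dnk divr_ge0 // expect_ge0. Qed.

Lemma expect_ndeg k : (0 < n)%N -> expect P (fun E => (ndeg E k)%:R) = n%:R * dnk P k.
Proof. by move=> n_gt0; rewrite /dnk mulrC divfK // pnatr_eq0 -lt0n. Qed.

Lemma expect_deg_tail k : (0 < n)%N ->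
  expect P (fun E => (deg_tail E k)%:R) = \sum_(k <= j < n.+1) j%:R * (n%:R * dnk P j).
Proof.
move=> n_gt0; under eq_fun do rewrite natr_sum.
rewrite expect_sum; apply: eq_bigr => j _.
by under eq_fun do rewrite natrM; rewrite expectZ expect_ndeg.
Qed.

Lemma expect_ndeg_sqr k : (1 < n)%N ->
  expect P (fun E => (ndeg E k)%:R ^+ 2) = (n * n.-1)%:R * dnkl P k k + n%:R * dnk P k.
Proof.
move=> n_gt1; rewrite -expect_ndeg ?(ltnW n_gt1) //.
rewrite /dnkl mulrC divfK ?pnatr_eq0 ?muln_eq0 -?lt0n; last lia.
rewrite -expectD; congr expect; apply: funext => E.
by rewrite expr2 -natrM -card_deg_pairs natrD.
Qed.

Lemma expect_maxdeg_le k :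
  expect P (fun E => (maxdeg E)%:R) <= k%:R + expect P (fun E => (deg_tail E k)%:R).
Proof.
rewrite -[k%:R]expect_cst -expectD; apply: ler_expect => E.
by rewrite -natrD ler_nat maxdeg_le_add_deg_tail.
Qed.

Lemma expect_maxdeg_ge k :
  k%:R * (1 - prob P (fun E => (maxdeg E < k)%N)) <= expect P (fun E => (maxdeg E)%:R).
Proof.
have -> : k%:R * (1 - prob P (fun E => (maxdeg E < k)%N)) =
    expect P (fun E => k%:R + - k%:R * (maxdeg E < k)%N%:R).
  by rewrite expectD expect_cst expectZ prob_expect; ring.
apply: ler_expect => E; case: ltnP => [_|kleD]; first by rewrite mulr1 subrr.
by rewrite mulr0 addr0 ler_nat.
Qed.

Lemma prob_maxdeg_lt_le k : (1 < n)%N -> 0 < n%:R * dnk P k ->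
  prob P (fun E => (maxdeg E < k)%N) <=
  ((n * n.-1)%:R * dnkl P k k + n%:R * dnk P k - (n%:R * dnk P k) ^+ 2) / (n%:R * dnk P k) ^+ 2.
Proof.
move=> n_gt1 mu_gt0; rewrite -(expect_ndeg_sqr _ n_gt1) -(expect_ndeg _ (ltnW n_gt1)).
apply: le_trans (prob_eq0_le_var _); last by rewrite expect_ndeg // ltnW.
by apply: ler_prob => E /ndeg_gt_maxdeg ->.
Qed.

End FiniteProbability.



(** * Real estimates *)

Local Open Scope classical_set_scope.

Section RealFacts.
Variable R : realType.

Lemma near_ln_ge (T : R) : \forall n \near \oo, T <= ln n%:R.
Proof.
exists (Num.truncn (expR T)).+1 => // n /= len.
have expT_lt : expR T < n%:R by apply: lt_le_trans (truncnS_gt _) _; rewrite ler_nat.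
rewrite -[X in X <= _]expRK ler_ln ?posrE ?expR_gt0 ?ltW //.
exact: lt_trans (expR_gt0 _) expT_lt.
Qed.

Lemma cvgr0_near_le (f : nat -> R) :
  (forall eta, 0 < eta -> \forall n \near \oo, 0 <= f n <= eta) -> f @ \oo --> 0.
Proof.
move=> near_le; apply/cvgrPdist_le => eta eta_gt0.
by apply: filterS (near_le _ eta_gt0) => n /andP[f_ge0 f_le]; rewrite sub0r normrN ger0_norm.
Qed.

Lemma sum_geo_le (x : R) m N : 0 <= x < 1 -> \sum_(m <= j < N) x ^+ j <= x ^+ m / (1 - x).
Proof.
case/andP=> x_ge0 x_lt1; have x1_gt0 : 0 < 1 - x by rewrite subr_gt0.
have [Nlem|ltmN] := leqP N m; first by rewrite big_geq // divr_ge0 ?exprn_ge0 // ltW.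
rewrite ler_pdivlMr // mulr_suml.
have -> : \sum_(m <= j < N) x ^+ j * (1 - x) = - \sum_(m <= j < N) (x ^+ j.+1 - x ^+ j).
  by rewrite -sumrN; apply: eq_bigr => j _; rewrite exprS; ring.
by rewrite telescope_sumr ?(ltnW ltmN) // opprB lerBlDr lerDl exprn_ge0.
Qed.

Lemma mul_expR_le (g x : R) : 0 < g -> 0 < x -> x * expR (- (g * x)) <= 2 / (g ^+ 2 * x).
Proof.
move=> g_gt0 x_gt0; have gx_gt0 : 0 < g * x by rewrite mulr_gt0.
have sqr_le_exp : (g * x) ^+ 2 / 2 <= expR (g * x).
  by apply: le_trans (expR_ge1Dxn 1 (ltW gx_gt0)); rewrite lerDr.
rewrite expRN ler_pdivrMr ?expR_gt0 //.
apply: le_trans (_ : 2 / (g ^+ 2 * x) * ((g * x) ^+ 2 / 2) <= _).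
  by rewrite le_eqVlt; apply/orP; left; apply/eqP; field; rewrite !lt0r_neq0.
by apply: ler_wpM2l => //; rewrite divr_ge0 // ltW // mulr_gt0 // exprn_gt0.
Qed.

Lemma second_moment_ratio_le (A mu x e : R) :
  0 < x -> 0 <= e <= 1 / 4 -> A <= (1 + e) * x ^+ 2 -> (1 - e) * x <= mu ->
  (A + mu - mu ^+ 2) / mu ^+ 2 <= 6 * e + mu^-1.
Proof.
move=> x_gt0 /andP[e_ge0 e_le] A_le mu_ge.
have mu_gt0 : 0 < mu by apply: lt_le_trans mu_ge; rewrite mulr_gt0 //; lra.
have sqr_le : (1 - e) ^+ 2 * x ^+ 2 <= mu ^+ 2.
  by rewrite -exprMn lerXn2r ?nnegrE ?(ltW mu_gt0) // mulr_ge0 ?(ltW x_gt0) // subr_ge0; lra.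
have e_poly : 1 + e <= (1 + 6 * e) * (1 - e) ^+ 2.
  by rewrite expr2; nra.
have A_mu : A / mu ^+ 2 <= 1 + 6 * e.
  rewrite ler_pdivrMr ?exprn_gt0 // (le_trans A_le) //.
  apply: le_trans (_ : (1 + 6 * e) * ((1 - e) ^+ 2 * x ^+ 2) <= _).
    by rewrite [X in _ <= X]mulrA ler_pM2r ?exprn_gt0.
  by apply: ler_wpM2l => //; lra.
rewrite (_ : (A + mu - mu ^+ 2) / mu ^+ 2 = A / mu ^+ 2 + mu^-1 - 1); last first.
  by field; rewrite lt0r_neq0.
lra.
Qed.

Lemma ratio_dev_cases (x L a eps e : R) : 0 < L -> 0 < a -> e <= a * eps ->
  eps < `|x / L - 1 / a| -> (1 + e) / a * L < x \/ x < (1 - e) / a * L.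
Proof.
move=> L_gt0 a_gt0 e_le; have ea_le : e / a <= eps by rewrite ler_pdivrMr // mulrC.
rewrite ltr_normr => /orP[up|lo]; [left|right].
  have : 1 / a + eps < x / L by lra.
  rewrite ltr_pdivlMr // => /(le_lt_trans _); apply.
  by apply: ler_wpM2r; [exact: ltW | rewrite mulrDl; lra].
have : x / L < 1 / a - eps by lra.
rewrite ltr_pdivrMr // => /lt_le_trans; apply.
by apply: ler_wpM2r; [exact: ltW | rewrite mulrBl; lra].
Qed.

Lemma norm_sub1_ratio_le (X L a e : R) :
  0 < L -> 0 < a -> 0 < e -> 2 * a / e <= L ->
  (1 - e) ^+ 2 / a * L <= X -> X <= (1 + e) / a * L + 2 -> `|1 - X / (L / a)| <= 2 * e.
Proof.
move=> L_gt0 a_gt0 e_gt0 L_ge X_ge X_le; rewrite invf_div mulrA.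
have aL_le : 2 * a / L <= e by rewrite ler_pdivrMr // [e * _]mulrC -ler_pdivrMr.
have up : X * a / L <= 1 + e + 2 * a / L.
  rewrite ler_pdivrMr // mulrDl divfK ?lt0r_neq0 //.
  apply: le_trans (ler_wpM2r (ltW a_gt0) X_le) _.
  by rewrite le_eqVlt; apply/orP; left; apply/eqP; field; rewrite lt0r_neq0.
have lo : (1 - e) ^+ 2 <= X * a / L.
  rewrite ler_pdivlMr //; apply: le_trans (ler_wpM2r (ltW a_gt0) X_ge).
  by rewrite le_eqVlt; apply/orP; left; apply/eqP; field; rewrite lt0r_neq0.
rewrite ler_norml; apply/andP; split; rewrite expr2 in lo; nra.
Qed.

End RealFacts.

Definition log_thr (R : realType) (c : R) (n : nat) : nat := (Num.truncn (c * ln n%:R)).+1.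

Section LogThreshold.
Variables (R : realType) (c : R).

Lemma log_thr_gt n : c * ln n%:R < (log_thr c n)%:R.
Proof. exact: truncnS_gt. Qed.

Lemma log_thr_le n : 0 <= c * ln n%:R -> (log_thr c n)%:R <= c * ln n%:R + 1.
Proof. by move=> cL_ge0; rewrite -natr1 lerD2r truncn_le. Qed.

Lemma log_thr_leq_nat n m :
  0 <= c * ln n%:R -> (log_thr c n <= m)%N = (c * ln n%:R < m%:R).
Proof. exact: truncn_lt_nat. Qed.

Lemma log_thr_cvg : 0 < c -> log_thr c n @[n --> \oo] --> \oo.
Proof.
move=> c_gt0; apply/cvgnyPge => A.
apply: filterS (near_ln_ge (A%:R / c)) => n; rewrite ler_pdivrMr // => AleL.
by rewrite -(ler_nat R) ltW // (le_lt_trans _ (log_thr_gt n)) // mulrC.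
Qed.

Lemma near_log_thr_le : 0 < c ->
  \forall n \near \oo, (log_thr c n)%:R <= 2 * c * ln n%:R.
Proof.
move=> c_gt0; apply: filterS (near_ln_ge c^-1) => n.
rewrite -[c^-1]mulr1 ler_pdivrMl // => cL_ge1.
by have := log_thr_le (le_trans ler01 cL_ge1); lra.
Qed.

Lemma mul_pow_log_thr_le (r : R) n : 0 < r -> (0 < n)%N ->
  n%:R * expR (- r) ^+ log_thr c n <= expR (- ((r * c - 1) * ln n%:R)).
Proof.
move=> r_gt0 n_gt0; rewrite -expRM_natl -[n%:R in X in X <= _]lnK ?posrE ?ltr0n //.
rewrite -expRD ler_expR.
have := ler_wpM2l (ltW r_gt0) (ltW (log_thr_gt n)); lra.
Qed.

Lemma log_thr_geo_sum_le (r : R) n : 0 < r -> 0 < r * c - 1 -> (1 < n)%N ->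
  ln n%:R * n%:R * \sum_(log_thr c n <= j < n.+1) expR (- r) ^+ j <=
    2 / ((1 - expR (- r)) * (r * c - 1) ^+ 2) / ln n%:R.
Proof.
set g := r * c - 1; set L := ln n%:R => r_gt0 g_gt0 n_gt1.
have L_gt0 : 0 < L by rewrite ln_gt0 // ltr1n.
have rho_gt0 : 0 < 1 - expR (- r) by rewrite subr_gt0 expR_lt1 oppr_lt0.
apply: le_trans (_ : L * n%:R * (expR (- r) ^+ log_thr c n / (1 - expR (- r))) <= _).
  rewrite ler_pM2l ?mulr_gt0 ?ltr0n 1?ltnW //.
  by rewrite sum_geo_le // expR_ge0 expR_lt1 oppr_lt0.
apply: le_trans (_ : L * expR (- (g * L)) / (1 - expR (- r)) <= _).
  rewrite !mulrA ler_pM2r ?invr_gt0 // -mulrA ler_pM2l //.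
  by rewrite mul_pow_log_thr_le // (ltnW n_gt1).
rewrite ler_pdivrMr // (le_trans (mul_expR_le g_gt0 L_gt0)) //.
by rewrite le_eqVlt; apply/orP; left; apply/eqP; field; rewrite !lt0r_neq0.
Qed.

Lemma log_thr_expR_ge (s : R) n : 0 < s -> 0 <= c -> (0 < n)%N ->
  expR (- s) * ((1 - s * c) * ln n%:R) <= n%:R * expR (- (s * (log_thr c n)%:R)).
Proof.
move=> s_gt0 c_ge0 n_gt0; have L_ge0 : 0 <= ln n%:R :> R by rewrite ln_ge0 // ler1n.
apply: le_trans (_ : n%:R * expR (- (s * (c * ln n%:R + 1))) <= _); last first.
  by rewrite ler_pM2l ?ltr0n // ler_expR lerN2 ler_pM2l // log_thr_le // mulr_ge0.
have -> : n%:R * expR (- (s * (c * ln n%:R + 1))) = expR ((1 - s * c) * ln n%:R) * expR (- s).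
  by rewrite -{1}[n%:R]lnK ?posrE ?ltr0n // -!expRD; congr expR; ring.
by rewrite mulrC ler_pM2r ?expR_gt0 // (le_trans _ (expR_ge1Dx _)) // lerDr.
Qed.

End LogThreshold.

Section DegreeRate.
Variables (R : realType) (dbar : nat -> R) (a : R).
Hypothesis dbar_rate : (fun k => - ln (dbar k) / k%:R) @ \oo --> a.

Lemma near_dbar_le r : r < a -> \forall k \near \oo, dbar k <= expR (- (r * k%:R)).
Proof.
move=> r_lt_a; near=> k.
have k_gt0 : 0 < k%:R :> R by rewrite ltr0n; near: k; exact: nbhs_infty_gt.
have [d_le0|d_gt0] := lerP (dbar k) 0; first by apply: le_trans d_le0 _; rewrite ltW ?expR_gt0.
rewrite -[dbar k]lnK ?posrE // ler_expR lerNr -ler_pdivlMr //.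
apply: ltW; near: k; exact: cvgr_gt dbar_rate _ r_lt_a.
Unshelve. all: end_near.
Qed.

Lemma near_dbar_ge s : a < s -> (\forall k \near \oo, 0 < dbar k) ->
  \forall k \near \oo, expR (- (s * k%:R)) <= dbar k.
Proof.
move=> a_lt_s dbar_gt0; near=> k.
have k_gt0 : 0 < k%:R :> R by rewrite ltr0n; near: k; exact: nbhs_infty_gt.
rewrite -[X in _ <= X]lnK ?posrE; last by near: k.
rewrite ler_expR lerNl -ler_pdivrMr //.
apply: ltW; near: k; exact: cvgr_lt dbar_rate _ a_lt_s.
Unshelve. all: end_near.
Qed.

End DegreeRate.

Lemma deg_rate_cvg (R : realType) (dbar : nat -> R) (q : R) : 0 < q < 1 ->
  (fun k => ln (dbar k) / (k%:R * ln q)) @ \oo --> (1 : R) ->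
  (fun k => - ln (dbar k) / k%:R) @ \oo --> - ln q.
Proof.
case/andP=> q_gt0 q_lt1 dbar_log.
have lnq_neq0 : ln q != 0 by rewrite ltr0_neq0 // ln_lt0 ?q_gt0.
have -> : (fun k => - ln (dbar k) / k%:R) = (fun k => - ln q * (ln (dbar k) / (k%:R * ln q))).
  apply: funext => k; have [->|k_neq0] := eqVneq k 0%N; first by rewrite !mul0r invr0 !mulr0.
  by field; rewrite lnq_neq0 pnatr_eq0 k_neq0.
by rewrite -[X in _ --> X]mulr1; apply: cvgMr.
Qed.

(** * The maximum degree *)

Section MaxDegree.
Variables (R : realType) (P : forall n : nat, {ffun graph n -> R}) (dbar : nat -> R).
Variables (a qb M : R).
Hypothesis HP : forall n, (1 <= n)%N -> random_graph (P n).
(* [a] plays the role of [ln (1/q)]: [dbar_le] and [dbar_ge] are the two halves of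
   [ln dbar_k ~ - a k]. *)
Hypothesis a_gt0 : 0 < a.
Hypothesis dbar_le : forall r, r < a -> \forall k \near \oo, dbar k <= expR (- (r * k%:R)).
Hypothesis dbar_ge : forall s, a < s -> \forall k \near \oo, expR (- (s * k%:R)) <= dbar k.
Hypothesis dnk_near_dbar : forall C : R, 0 < C -> forall eps : R, 0 < eps ->
  exists N K : nat, forall n k, (N <= n)%N -> (K <= k)%N ->
    k%:R <= C * ln n%:R -> `|dnk (P n) k - dbar k| <= eps * dbar k.
Hypothesis dnkl_near_dbar : forall C : R, 0 < C -> forall eps : R, 0 < eps ->
  exists N K : nat, forall n k l, (N <= n)%N -> (K <= k)%N -> (K <= l)%N ->
    k%:R <= C * ln n%:R -> l%:R <= C * ln n%:R ->
    `|dnkl (P n) k l - dbar k * dbar l| <= eps * (dbar k * dbar l).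
Hypothesis qb_gt0 : 0 < qb.
Hypothesis qb_lt1 : qb < 1.
Hypothesis dnk_le_pow : forall n k, (1 <= n)%N -> (1 <= k)%N -> `|dnk (P n) k| <= M * qb ^+ k.

Lemma M_ge0 : 0 <= M.
Proof.
have := @dnk_le_pow 1 1 erefl erefl.
by rewrite expr1 => /(le_trans (normr_ge0 _)); rewrite pmulr_lge0.
Qed.

Lemma dnk_le_geo_moderate (r C : R) : r < a -> 0 < C -> exists K N, forall n j,
  (N <= n)%N -> (K <= j)%N -> j%:R <= C * ln n%:R -> dnk (P n) j <= 2 * expR (- r) ^+ j.
Proof.
move=> r_lt_a C_gt0; have [N [K1 dnkE]] := dnk_near_dbar C_gt0 ltr01.
have [K2 _ dbarE] := dbar_le r_lt_a.
exists (maxn K1 K2), N => n j Nn; rewrite geq_max => /andP[K1j K2j] jle.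
have := dnkE n j Nn K1j jle; rewrite mul1r ler_norml => /andP[_ dnk_le].
rewrite -expRM_natl (_ : j%:R * - r = - (r * j%:R)); last by ring.
by have := dbarE j K2j; lra.
Qed.

(* Beyond [tailC * ln n] hypothesis 3 already gives [dnk <= M n^-4]. *)
Let tailC := 4 / - ln qb.

Let tailC_gt0 : 0 < tailC.
Proof. by rewrite divr_gt0 // oppr_gt0 ln_lt0 ?qb_gt0. Qed.

Lemma dnk_le_large n j : (1 <= n)%N -> (1 <= j)%N ->
  tailC * ln n%:R < j%:R -> dnk (P n) j <= M / n%:R ^+ 4.
Proof.
move=> n_ge1 j_ge1 jgt; have b_gt0 : 0 < - ln qb by rewrite oppr_gt0 ln_lt0 ?qb_gt0.
apply: le_trans (ler_norm _) (le_trans (dnk_le_pow n_ge1 j_ge1) _).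
apply: ler_wpM2l; first exact: M_ge0.
rewrite -[qb]lnK ?posrE // -expRM_natl -[n%:R]lnK ?posrE ?ltr0n // -expRM_natl -expRN.
rewrite ler_expR lerNr -mulrN -ler_pdivrMr //.
by rewrite mulrAC ltW.
Qed.

Lemma deg_tail_term_le r : r < a -> exists K N, forall n j,
  (N <= n)%N -> (K <= j <= n)%N ->
  j%:R * (n%:R * dnk (P n) j) <=
    2 * tailC * (ln n%:R * n%:R * expR (- r) ^+ j) + M / n%:R ^+ 2.
Proof.
move=> r_lt_a; have [K [N dnk_geo]] := dnk_le_geo_moderate r_lt_a tailC_gt0.
exists (maxn K 1), (maxn N 1) => n j.
rewrite !geq_max => /andP[Nn n_ge1] /andP[/andP[Kj j_ge1] jn].
have n_gt0 : 0 < n%:R :> R by rewrite ltr0n.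
have L_ge0 : 0 <= ln n%:R :> R by rewrite ln_ge0 // ler1n.
have dnk_ge0 := dnk_ge0 (HP n_ge1) j.
have geo_ge0 : 0 <= 2 * tailC * (ln n%:R * n%:R * expR (- r) ^+ j).
  apply: mulr_ge0; first by apply: mulr_ge0 => //; exact: ltW.
  by rewrite !mulr_ge0 ?exprn_ge0 ?expR_ge0 // ltW.
have pow_ge0 : 0 <= M / n%:R ^+ 2 by rewrite divr_ge0 ?M_ge0 ?exprn_ge0 ?ltW.
have [j_moderate|j_large] := lerP j%:R (tailC * ln n%:R).
  rewrite -[X in X <= _]addr0; apply: lerD => //.
  rewrite (_ : 2 * _ * _ = tailC * ln n%:R * (n%:R * (2 * expR (- r) ^+ j))); last by ring.
  apply: ler_pM => //; first by rewrite mulr_ge0 // ltW.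
  by apply: ler_wpM2l; [exact: ltW | exact: dnk_geo].
rewrite -[X in X <= _]add0r; apply: lerD => //.
apply: le_trans (_ : n%:R * (n%:R * (M / n%:R ^+ 4)) <= _).
  apply: ler_pM; [by [] | by rewrite mulr_ge0 // ltW | by rewrite ler_nat |].
  by apply: ler_wpM2l; [exact: ltW | exact: dnk_le_large].
by rewrite le_eqVlt; apply/orP; left; apply/eqP; field; rewrite lt0r_neq0.
Qed.

Lemma near_expect_deg_tail_le c : 1 < c * a -> exists A : R, \forall n \near \oo,
  expect (P n) (fun E => (deg_tail E (log_thr c n))%:R) <= A / ln n%:R + 2 * M / n%:R.
Proof.
move=> ca_gt1; have c_gt0 : 0 < c by rewrite -(pmulr_lgt0 _ a_gt0) (lt_trans ltr01).
(* With [1 / c < r < a], the factor [n * exp (- r * log_thr c n)] is at most [n ^ (1 - r c)]. *)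
set r := (a + c^-1) / 2.
have r_gt0 : 0 < r by rewrite divr_gt0 // addr_gt0 ?invr_gt0.
have r_lt_a : r < a.
  have : c^-1 < a by rewrite -[c^-1]mulr1 ltr_pdivrMl.
  by rewrite /r; lra.
have g_gt0 : 0 < r * c - 1.
  rewrite (_ : r * c - 1 = (c * a - 1) / 2); last by rewrite /r; field; rewrite lt0r_neq0.
  by rewrite divr_gt0 // subr_gt0.
have [K [N term_le]] := deg_tail_term_le r_lt_a.
exists (2 * tailC * (2 / ((1 - expR (- r)) * (r * c - 1) ^+ 2))).
near=> n.
have n_gt1 : (1 < n)%N by near: n; exact: nbhs_infty_gt.
have Nn : (N <= n)%N by near: n; exact: nbhs_infty_ge.
have Kk : (K <= log_thr c n)%N by near: n; exact: log_thr_cvg c_gt0 _ (nbhs_infty_ge K).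
have n_gt0 : 0 < n%:R :> R by rewrite ltr0n ltnW.
rewrite expect_deg_tail ?HP 1?ltnW //.
apply: le_trans (ler_sum_nat (fun j => _ : (_ <= j < _)%N -> _ <= _)) _.
  by move=> j /andP[kj jn]; apply: term_le => //; rewrite (leq_trans Kk kj).
rewrite big_split /= -!mulr_sumr sumr_const_nat; apply: lerD.
  have := log_thr_geo_sum_le r_gt0 g_gt0 n_gt1; rewrite -mulrA => geo_le.
  by rewrite -[X in _ <= X]mulrA ler_pM2l ?(mulr_gt0 _ tailC_gt0).
apply: le_trans (_ : M * (n%:R ^- 2 * (2 * n%:R)) <= _).
  rewrite -(mulr_natr _ (n.+1 - _)); apply: ler_wpM2l; first exact: M_ge0.
  apply: ler_wpM2l; first by rewrite invr_ge0 exprn_ge0 // ltW.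
  rewrite -natrM ler_nat (leq_trans (leq_subr _ _)) //.
  by rewrite mul2n -addnn -addn1 leq_add2l ltnW.
by rewrite le_eqVlt; apply/orP; left; apply/eqP; field; rewrite lt0r_neq0.
Unshelve. all: end_near.
Qed.

Lemma expect_deg_tail_cvg0 c : 1 < c * a ->
  (fun n => expect (P n) (fun E => (deg_tail E (log_thr c n))%:R)) @ \oo --> 0.
Proof.
move=> ca_gt1; have [A tail_le] := near_expect_deg_tail_le ca_gt1.
apply: cvgr0_near_le => eta eta_gt0; near=> n.
have n_gt1 : (1 < n)%N by near: n; exact: nbhs_infty_gt.
have L_gt0 : 0 < ln n%:R :> R by rewrite ln_gt0 // ltr1n.
have n_gt0 : 0 < n%:R :> R by rewrite ltr0n ltnW.
rewrite (expect_ge0 (HP (ltnW n_gt1))) //=.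
apply: le_trans (_ : _ <= A / ln n%:R + 2 * M / n%:R) _; first by near: n.
rewrite [eta]splitr; apply: lerD.
  rewrite ler_pdivrMr // mulrC -ler_pdivrMr ?divr_gt0 //.
  by near: n; exact: near_ln_ge.
rewrite ler_pdivrMr // [_ * n%:R]mulrC -ler_pdivrMr ?divr_gt0 //.
by near: n; exact: nbhs_infty_ger.
Unshelve. all: end_near.
Qed.

Let rate_gap (c : R) : 0 < c -> c * a < 1 ->
  exists2 s, a < s & 0 < 1 - s * c.
Proof.
move=> c_gt0 ca_lt1; exists ((a + c^-1) / 2).
  have : a < c^-1 by rewrite -[c^-1]mulr1 ltr_pdivlMl.
  by lra.
rewrite (_ : 1 - _ * c = (1 - c * a) / 2); last by field; rewrite lt0r_neq0.
by rewrite divr_gt0 // subr_gt0.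
Qed.

Lemma near_mean_log_thr_ge (c T : R) : 0 < c -> c * a < 1 ->
  \forall n \near \oo, T <= n%:R * dnk (P n) (log_thr c n).
Proof.
move=> c_gt0 ca_lt1; have [s a_lt_s sc_gt0] := rate_gap c_gt0 ca_lt1.
have s_gt0 : 0 < s by apply: lt_trans a_lt_s.
have c2_gt0 : 0 < 2 * c by rewrite mulr_gt0.
have half_gt0 : 0 < 2^-1 :> R by rewrite invr_gt0.
have [N [K dnk_near]] := dnk_near_dbar c2_gt0 half_gt0.
near=> n.
have n_gt0 : (0 < n)%N by near: n; exact: nbhs_infty_gt.
have Nn : (N <= n)%N by near: n; exact: nbhs_infty_ge.
have Kk : (K <= log_thr c n)%N by near: n; exact: log_thr_cvg c_gt0 _ (nbhs_infty_ge _).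
have k_le : (log_thr c n)%:R <= 2 * c * ln n%:R by near: n; exact: near_log_thr_le.
have dbar_k : expR (- (s * (log_thr c n)%:R)) <= dbar (log_thr c n).
  by near: n; exact: log_thr_cvg c_gt0 _ (dbar_ge a_lt_s).
have growth := log_thr_expR_ge s_gt0 (ltW c_gt0) n_gt0.
have T_le : 2 * T <= expR (- s) * ((1 - s * c) * ln n%:R).
  rewrite mulrA [X in _ <= X]mulrC -ler_pdivrMr ?mulr_gt0 ?expR_gt0 //.
  by near: n; exact: near_ln_ge.
have := dnk_near n _ Nn Kk k_le; rewrite ler_norml => /andP[dnk_ge _].
have n_ge0 : 0 <= n%:R :> R by [].
have := ler_wpM2l n_ge0 dbar_k; have := ler_wpM2l n_ge0 dnk_ge; lra.
Unshelve. all: end_near.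
Qed.

Lemma near_second_moment_log_thr (c e : R) : 0 < c -> 0 < e -> \forall n \near \oo,
  [/\ 0 < dbar (log_thr c n),
      (1 - e) * (n%:R * dbar (log_thr c n)) <= n%:R * dnk (P n) (log_thr c n) &
      (n * n.-1)%:R * dnkl (P n) (log_thr c n) (log_thr c n) <=
        (1 + e) * (n%:R * dbar (log_thr c n)) ^+ 2].
Proof.
move=> c_gt0 e_gt0; have c2_gt0 : 0 < 2 * c by rewrite mulr_gt0.
have [N1 [K1 dnk_near]] := dnk_near_dbar c2_gt0 e_gt0.
have [N2 [K2 dnkl_near]] := dnkl_near_dbar c2_gt0 e_gt0.
have a_lt_a1 : a < a + 1 by rewrite ltrDl.
near=> n.
have [N1n N2n] : (N1 <= n)%N /\ (N2 <= n)%N by split; near: n; exact: nbhs_infty_ge.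
have [K1k K2k] : (K1 <= log_thr c n)%N /\ (K2 <= log_thr c n)%N.
  by split; near: n; exact: log_thr_cvg c_gt0 _ (nbhs_infty_ge _).
have k_le : (log_thr c n)%:R <= 2 * c * ln n%:R by near: n; exact: near_log_thr_le.
have dbar_k : expR (- ((a + 1) * (log_thr c n)%:R)) <= dbar (log_thr c n).
  by near: n; exact: log_thr_cvg c_gt0 _ (dbar_ge a_lt_a1).
have D_gt0 := lt_le_trans (expR_gt0 _) dbar_k.
split => //.
  have := dnk_near n _ N1n K1k k_le; rewrite ler_norml => /andP[dnk_ge _].
  by rewrite mulrCA; apply: ler_wpM2l => //; lra.
have := dnkl_near n _ _ N2n K2k K2k k_le k_le; rewrite ler_norml => /andP[_ dnkl_le].
apply: le_trans (_ : (n * n.-1)%:R * ((1 + e) * (dbar (log_thr c n) ^+ 2)) <= _).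
  by apply: ler_wpM2l => //; rewrite expr2; lra.
rewrite exprMn [X in _ <= X]mulrCA; apply: ler_wpM2r; first by rewrite mulr_ge0 ?exprn_ge0 ?ltW //; lra.
by rewrite -natrX ler_nat -mulnn leq_mul2l leq_pred orbT.
Unshelve. all: end_near.
Qed.

Lemma prob_maxdeg_lt_log_thr_cvg0 (c : R) : 0 < c -> c * a < 1 ->
  (fun n => prob (P n) (fun E => (maxdeg E < log_thr c n)%N)) @ \oo --> 0.
Proof.
move=> c_gt0 ca_lt1; apply: cvgr0_near_le => eta eta_gt0.
set e := Num.min (eta / 12) (1 / 4).
have e_gt0 : 0 < e by rewrite lt_min !divr_gt0.
have [e_le1 e_le2] : e <= eta / 12 /\ e <= 1 / 4 by split; rewrite ge_min lexx ?orbT.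
near=> n.
have n_gt1 : (1 < n)%N by near: n; exact: nbhs_infty_gt.
have mu_ge : 2 / eta <= n%:R * dnk (P n) (log_thr c n).
  by near: n; exact: near_mean_log_thr_ge.
have [D_gt0 mu_ge' A_le] : [/\ 0 < dbar (log_thr c n),
    (1 - e) * (n%:R * dbar (log_thr c n)) <= n%:R * dnk (P n) (log_thr c n) &
    (n * n.-1)%:R * dnkl (P n) (log_thr c n) (log_thr c n) <=
      (1 + e) * (n%:R * dbar (log_thr c n)) ^+ 2].
  by near: n; exact: near_second_moment_log_thr.
have mu_gt0 : 0 < n%:R * dnk (P n) (log_thr c n) by apply: lt_le_trans mu_ge; rewrite divr_gt0.
rewrite (prob_ge0 (HP (ltnW n_gt1))) /=.
apply: le_trans (prob_maxdeg_lt_le (HP (ltnW n_gt1)) n_gt1 mu_gt0) _.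
apply: le_trans (second_moment_ratio_le _ _ A_le mu_ge') _.
- by rewrite mulr_gt0 // ltr0n ltnW.
- by rewrite (ltW e_gt0) e_le2.
have : (n%:R * dnk (P n) (log_thr c n))^-1 <= eta / 2.
  by rewrite -[eta / 2]invf_div lef_pV2 ?posrE ?divr_gt0.
lra.
Unshelve. all: end_near.
Qed.

Lemma prob_maxdeg_ge_log_thr_cvg0 (c : R) : 1 < c * a ->
  (fun n => prob (P n) (fun E => (log_thr c n <= maxdeg E)%N)) @ \oo --> 0.
Proof.
move=> ca_gt1; apply: (squeeze_cvgr _ (cvg_cst 0) (expect_deg_tail_cvg0 ca_gt1)).
near=> n; have n_ge1 : (1 <= n)%N by near: n; exact: nbhs_infty_ge.
rewrite (prob_ge0 (HP n_ge1)) (prob_le_expect (HP n_ge1)) // => E kleD.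
by rewrite ler1n (leq_trans (leq_trans _ kleD) (maxdeg_le_deg_tail kleD)).
Unshelve. all: end_near.
Qed.

Lemma maxdeg_log_concentration (eps : R) : 0 < eps ->
  (fun n => prob (P n) (fun E => eps < `|(maxdeg E)%:R / ln n%:R - 1 / a|)) @ \oo --> 0.
Proof.
move=> eps_gt0; set e := Num.min (a * eps) (1 / 2).
have e_gt0 : 0 < e by rewrite lt_min mulr_gt0 ?divr_gt0.
have [e_le1 e_le2] : e <= a * eps /\ e <= 1 / 2 by split; rewrite ge_min lexx ?orbT.
have c0a : 1 < (1 + e) / a * a by rewrite divfK ?lt0r_neq0 // ltrDl.
have c1_gt0 : 0 < (1 - e) / a by rewrite divr_gt0 //; lra.
have c1a : (1 - e) / a * a < 1 by rewrite divfK ?lt0r_neq0 //; lra.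
apply: (squeeze_cvgr _ (cvg_cst 0)); last first.
  rewrite -[X in _ --> X](addr0 0).
  exact: cvgD (prob_maxdeg_ge_log_thr_cvg0 c0a) (prob_maxdeg_lt_log_thr_cvg0 c1_gt0 c1a).
near=> n; have n_gt1 : (1 < n)%N by near: n; exact: nbhs_infty_gt.
have HPn := HP (ltnW n_gt1).
have L_gt0 : 0 < ln n%:R :> R by rewrite ln_gt0 // ltr1n.
have c0L_ge0 : 0 <= (1 + e) / a * ln n%:R.
  by rewrite mulr_ge0 ?divr_ge0 ?addr_ge0 ?ltW.
rewrite (prob_ge0 HPn) /=; apply: le_trans (prob_or_le HPn _ _).
apply: (ler_prob HPn) => E /(ratio_dev_cases L_gt0 a_gt0 e_le1) [up|lo]; apply/orP.
  by left; rewrite log_thr_leq_nat.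
by right; rewrite -(ltr_nat R) (lt_trans lo (log_thr_gt _ _)).
Unshelve. all: end_near.
Qed.

Lemma expect_maxdeg_log_cvg :
  (fun n => expect (P n) (fun E => (maxdeg E)%:R) / (ln n%:R / a)) @ \oo --> (1 : R).
Proof.
apply/cvgrPdist_le => eps eps_gt0; set e := Num.min (eps / 2) (1 / 2).
have e_gt0 : 0 < e by rewrite lt_min !divr_gt0.
have [e_le1 e_le2] : e <= eps / 2 /\ e <= 1 / 2 by split; rewrite ge_min lexx ?orbT.
have c0a : 1 < (1 + e) / a * a by rewrite divfK ?lt0r_neq0 // ltrDl.
have c1_gt0 : 0 < (1 - e) / a by rewrite divr_gt0 //; lra.
have c1a : (1 - e) / a * a < 1 by rewrite divfK ?lt0r_neq0 //; lra.
near=> n; have n_gt1 : (1 < n)%N by near: n; exact: nbhs_infty_gt.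
have HPn := HP (ltnW n_gt1).
have L_gt0 : 0 < ln n%:R :> R by rewrite ln_gt0 // ltr1n.
have tail_le1 : expect (P n) (fun E => (deg_tail E (log_thr ((1 + e) / a) n))%:R) <= 1.
  by near: n; exact: cvgr_le (expect_deg_tail_cvg0 c0a) _ ltr01.
have p_le : prob (P n) (fun E => (maxdeg E < log_thr ((1 - e) / a) n)%N) <= e.
  by near: n; exact: cvgr_le (prob_maxdeg_lt_log_thr_cvg0 c1_gt0 c1a) _ e_gt0.
have L_ge : 2 * a / e <= ln n%:R by near: n; exact: near_ln_ge.
apply: le_trans (_ : 2 * e <= _); last by lra.
apply: (norm_sub1_ratio_le L_gt0 a_gt0 e_gt0 L_ge).
  apply: le_trans (expect_maxdeg_ge HPn (log_thr ((1 - e) / a) n)).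
  rewrite (_ : _ / a * _ = (1 - e) / a * ln n%:R * (1 - e)); last by rewrite expr2; ring.
  apply: ler_pM; [by rewrite mulr_ge0 ?ltW | lra | exact: ltW (log_thr_gt _ _) | lra].
apply: le_trans (expect_maxdeg_le HPn (log_thr ((1 + e) / a) n)) _.
rewrite (_ : _ + 2 = (1 + e) / a * ln n%:R + 1 + 1); last by ring.
apply: lerD => //; apply: log_thr_le.
by rewrite mulr_ge0 ?divr_ge0 ?addr_ge0 ?ltW.
Unshelve. all: end_near.
Qed.

End MaxDegree.

Theorem theorem1 (R : realType)
  (P : forall n : nat, {ffun graph n -> R})
  (dbar : nat -> R) (q : R)
  (HP : forall n, (1 <= n)%N -> random_graph (P n))
  (Hq : 0 < q < 1)
  (Hdbar0 : forall k, (1 <= k)%N -> 0 <= dbar k)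
  (Hdbar1 : (fun N => \sum_(1 <= k < N) dbar k) @ \oo --> (1:R))
  (Hlim : forall k, (1 <= k)%N -> (fun n => dnk (P n) k) @ \oo --> dbar k)
  (Hpos : exists K, forall k, (K <= k)%N -> 0 < dbar k)
  (Hlog : (fun k => ln (dbar k) / (k%:R * ln q)) @ \oo --> (1:R))
  (H2a : forall C : R, 0 < C -> forall eps : R, 0 < eps ->
     exists N K : nat, forall n k, (N <= n)%N -> (K <= k)%N ->
       k%:R <= C * ln n%:R ->
       `|dnk (P n) k - dbar k| <= eps * dbar k)
  (H2b : forall C : R, 0 < C -> forall eps : R, 0 < eps ->
     exists N K : nat, forall n k l, (N <= n)%N -> (K <= k)%N -> (K <= l)%N ->
       k%:R <= C * ln n%:R -> l%:R <= C * ln n%:R ->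
       `|dnkl (P n) k l - dbar k * dbar l| <= eps * (dbar k * dbar l))
  (H3 : exists qbar : R, 0 < qbar < 1 /\ exists M : R,
     (forall n k, (1 <= n)%N -> (1 <= k)%N -> `|dnk (P n) k| <= M * qbar ^+ k) /\
     (forall n k l, (1 <= n)%N -> (1 <= k)%N -> (1 <= l)%N ->
        `|dnkl (P n) k l| <= M * qbar ^+ (k + l))) :
  (forall eps : R, 0 < eps ->
     (fun n => prob (P n) (fun E =>
        eps < `|(maxdeg E)%:R / ln n%:R - 1 / ln (1 / q)|)) @ \oo --> (0:R))
  /\
  (fun n => expect (P n) (fun E => (maxdeg E)%:R) / (ln n%:R / ln (1 / q)))
     @ \oo --> (1:R).
Proof.
have /andP[q_gt0 q_lt1] := Hq.
have a_gt0 : 0 < - ln q by rewrite oppr_gt0 ln_lt0 ?q_gt0.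
have dbar_rate := deg_rate_cvg Hq Hlog.
have dbar_gt0 : \forall k \near \oo, 0 < dbar k.
  by have [K dbarK] := Hpos; exists K => // k /= /dbarK.
have dbar_le := near_dbar_le dbar_rate.
have dbar_ge s (a_lt_s : - ln q < s) := near_dbar_ge dbar_rate a_lt_s dbar_gt0.
have [qb [/andP[qb_gt0 qb_lt1] [M [dnk_le_pow _]]]] := H3.
have -> : ln (1 / q) = - ln q by rewrite div1r lnV ?posrE.
split=> [eps eps_gt0|].
  exact (maxdeg_log_concentration HP a_gt0 dbar_le dbar_ge H2a H2b qb_gt0 qb_lt1 dnk_le_pow eps_gt0).
exact (expect_maxdeg_log_cvg HP a_gt0 dbar_le dbar_ge H2a H2b qb_gt0 qb_lt1 dnk_le_pow).
Qed.
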